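(* Let $u$ be a bounded nonnegative function on $\mathbb{N}$ and $\mathfrak{N}_u$ the 1D-GWN operator associated with $u$. Then $$\mathfrak{N}_u\Phi=\sum_{k=0}^\infty u(k)\,\mathfrak{a}_k^\dagger\mathfrak{a}_k\Phi,\qquad\Phi\in\mathcal{S}^*(M),$$ where the series converges in the strong topology of $\mathcal{S}^*(M)$.
   Context: Setting: $M$ a discrete-time normal martingale with the chaotic representation property; $Z_0=M_0$, $Z_n=M_n-M_{n-1}$; $\Gamma$ the finite subsets of $\mathbb{N}$, $Z_\emptyset=1$, $Z_\sigma=\prod_{j\in\sigma}Z_j$, an orthonormal basis of $\mathcal{L}^2(M)$. $\lambda_\emptyset=1$, $\lambda_\sigma=\prod_{k\in\sigma}(k+1)$; $\mathcal{S}(M)=\{\xi\in\mathcal{L}^2(M):\sum_\sigma\lambda_\sigma^{2p}|\langle Z_\sigma,\xi\rangle|^2<\infty\ \forall p\ge0\}$ (countably Hilbertian nuclear space), $\mathcal{S}^*(M)$ its dual with the strong topology. Fock transform $\widehat\Phi(\sigma)=\Phi(Z_\sigma)$ (determines $\Phi$); $\mathbf{1}_\sigma$ is the indicator of $\sigma$. The 1D-GWN operator $\mathfrak{N}_u$ is the unique continuous linear operator on $\mathcal{S}^*(M)$ with $\widehat{\mathfrak{N}_u\Phi}(\sigma)=\#_u(\sigma)\widehat\Phi(\sigma)$, $\#_u(\sigma)=\sum_k\mathbf{1}_\sigma(k)u(k)$. For $k\ge0$, $\mathfrak{a}_k,\mathfrak{a}_k^\dagger$ are the continuous linear operators on $\mathcal{S}^*(M)$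 determined by $\widehat{\mathfrak{a}_k\Phi}(\sigma)=(1-\mathbf{1}_\sigma(k))\widehat\Phi(\sigma\cup\{k\})$ and $\widehat{\mathfrak{a}_k^\dagger\Phi}(\sigma)=\mathbf{1}_\sigma(k)\widehat\Phi(\sigma\setminus\{k\})$. *)

From HB Require Import structures.
From mathcomp Require Import all_boot all_order all_algebra.
From mathcomp Require Import reals.
From mathcomp Require Import complex finmap.

Set Implicit Arguments.
Unset Strict Implicit.
Unset Printing Implicit Defensive.

Import Order.TTheory GRing.Theory Num.Theory.
Local Open Scope ring_scope.
Local Open Scope complex_scope.


Notation Gamma := {fset nat}.

Definition lambda (s : Gamma) : nat := \prod_(k <- s) k.+1.

Section FockModel.
Variable R : realType.
Local Notation C := R[i].

(** An element xi of L^2(M) is represented by its coefficient family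
    sigma |-> <Z_sigma, xi> with respect to the orthonormal basis (Z_sigma).
    [wbound p xi M] : every finite partial sum of
    sum_sigma lambda_sigma^{2p} |<Z_sigma,xi>|^2 is <= M, i.e. ||xi||_p^2 <= M. *)
Definition wbound (p : nat) (xi : Gamma -> C) (M : R) : Prop :=
  forall A : {fset Gamma},
    \sum_(s <- A) ((lambda s ^ (2 * p))%:R * `|xi s| ^+ 2) <= M%:C.

Definition inS (xi : Gamma -> C) : Prop :=
  forall p : nat, exists M : R, wbound p xi M.

Definition Zb (s : Gamma) : Gamma -> C := fun t => (t == s)%:R.

(** Generalized functionals: functions on coefficient families; only their
    restriction to S(M) is relevant. *)
Definition functional := (Gamma -> C) -> C.

Definition inSdual (Phi : functional) : Prop :=
  (forall (a : C) (xi eta : Gamma -> C), inS xi -> inS eta ->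
      Phi (fun s => a * xi s + eta s) = a * Phi xi + Phi eta) /\
  exists (p : nat) (K : R), forall xi : Gamma -> C, inS xi ->
      forall M : R, wbound p xi M -> `|Phi xi| ^+ 2 <= (K * M)%:C.

Definition fock (Phi : functional) (s : Gamma) : C := Phi (Zb s).

Definition boundedS (B : (Gamma -> C) -> Prop) : Prop :=
  (forall xi, B xi -> inS xi) /\
  forall p : nat, exists M : R, forall xi, B xi -> wbound p xi M.

Definition strong_cvg (Ps : nat -> functional) (P : functional) : Prop :=
  forall B : (Gamma -> C) -> Prop, boundedS B ->
  forall eps : R, 0 < eps -> exists N : nat, forall n : nat, (N <= n)%N ->
  forall xi, B xi -> `|Ps n xi - P xi| <= eps%:C.

Definition count_u (u : nat -> R) (s : Gamma) : R := \sum_(k <- s) u k.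

Definition is_GWN_op (u : nat -> R) (N : functional -> functional) : Prop :=
  forall Phi, inSdual Phi ->
    inSdual (N Phi) /\ forall s, fock (N Phi) s = (count_u u s)%:C * fock Phi s.

Definition is_annihilators (a : nat -> functional -> functional) : Prop :=
  forall k Phi, inSdual Phi ->
    inSdual (a k Phi) /\
    forall s, fock (a k Phi) s = (1 - (k \in s)%:R) * fock Phi (s `|` [fset k])%fset.

Definition is_creators (ad : nat -> functional -> functional) : Prop :=
  forall k Phi, inSdual Phi ->
    inSdual (ad k Phi) /\
    forall s, fock (ad k Phi) s = (k \in s)%:R * fock Phi (s `\ k)%fset.

End FockModel.

From HB Require Import structures.
From mathcomp Require Import all_boot all_order all_algebra.
From mathcomp Require Import reals.
From mathcomp Require Import complex finmap.
From mathcomp Require Import classical_sets boolp.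
From mathcomp Require Import ring lra zify.
Import Order.TTheory GRing.Theory Num.Theory.
Local Open Scope ring_scope.
Local Open Scope complex_scope.

(** Let Ψ_n = Σ_{k ≤ n} u(k) a_k† a_k Φ.  Since a_k† a_k multiplies Fock
    transforms by 1_σ(k), the functionals N_u Φ and Ψ_n + Φ(c_n ·) have the
    same Fock transform σ ↦ #_u(σ) hat Φ(σ), where c_n(σ) = Σ_{k ∈ σ, k > n} u(k)
    is the tail of #_u(σ).  A functional of S*(M) is determined on S(M) by its
    Fock transform (finitely supported vectors are dense in every ‖·‖_p), so
    N_u Φ − Ψ_n = Φ(c_n ·) on S(M).  Now c_n(σ) ≤ K_u λ_σ²/(n+2), because σ
    meets (n, ∞) only if λ_σ ≥ n+2 and #σ ≤ λ_σ; hence if |Φ ξ|² ≤ K ‖ξ‖_p²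
    then |Φ(c_n ξ)|² ≤ K K_u² ‖ξ‖_{p+2}²/(n+2)², which tends to 0 uniformly
    on bounded subsets of S(M). *)

Set Implicit Arguments.
Unset Strict Implicit.
Unset Printing Implicit Defensive.

Lemma lambda_gt0 (s : Gamma) : (0 < lambda s)%N.
Proof. by rewrite /lambda; elim/big_ind: _ => // x y; rewrite muln_gt0 => -> ->. Qed.

Section Norms.
Variable R : realType.
Local Notation C := R[i].

(** The real modulus of a complex number, so that |z| = (cmod z)%:C;
    estimates are carried out in the real field R. *)
Definition cmod (z : C) : R := complex.Re `|z|.

Lemma normE (z : C) : `|z| = (cmod z)%:C.
Proof. by rewrite /cmod (RRe_real (x:=`|z|)) // normr_real. Qed.

Lemma cmod_ge0 (z : C) : 0 <= cmod z.
Proof. by rewrite -ler0c -normE. Qed.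

Lemma cmodM (x y : C) : cmod (x * y) = cmod x * cmod y.
Proof. by apply: complexI; rewrite rmorphM /= -!normE normrM. Qed.

Lemma cmodD (x y : C) : cmod (x + y) <= cmod x + cmod y.
Proof. by rewrite -lecR rmorphD /= -!normE ler_normD. Qed.

Lemma cmod0 : cmod 0 = 0.
Proof. by apply: complexI; rewrite -normE normr0. Qed.

Lemma cmod1 : cmod 1 = 1.
Proof. by apply: complexI; rewrite -normE normr1. Qed.

Lemma cmod_real (r : R) : cmod r%:C = `|r|.
Proof. by rewrite /cmod normc_def /= expr0n /= addr0 sqrtr_sqr. Qed.

Lemma cmod_sqr_le (z : C) (r : R) : (`|z| ^+ 2 <= r%:C) = (cmod z ^+ 2 <= r).
Proof. by rewrite normE -rmorphXn lecR. Qed.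

Lemma norm_le_of_cmod_sqr (z : C) (e : R) :
  0 <= e -> cmod z ^+ 2 <= e ^+ 2 -> `|z| <= e%:C.
Proof.
by move=> e0 h; rewrite normE lecR -(@ler_pXn2r _ 2) ?nnegrE ?cmod_ge0.
Qed.

Lemma cmod_lin_sqr (a x y : C) :
  cmod (a * x + y) ^+ 2 <= 2 * cmod a ^+ 2 * cmod x ^+ 2 + 2 * cmod y ^+ 2.
Proof.
have hD := cmodD (a * x) y; rewrite cmodM in hD.
have hD2 : cmod (a * x + y) ^+ 2 <= (cmod a * cmod x + cmod y) ^+ 2.
  by rewrite lerXn2r // nnegrE ?addr_ge0 ?mulr_ge0 ?cmod_ge0.
have := sqr_ge0 (cmod a * cmod x - cmod y); nra.
Qed.

Definition weight (p : nat) (xi : Gamma -> C) (s : Gamma) : R :=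
  (lambda s ^ (2 * p))%:R * cmod (xi s) ^+ 2.

Lemma wboundE p (xi : Gamma -> C) M :
  wbound p xi M <-> forall A : {fset Gamma}, \sum_(s <- A) weight p xi s <= M.
Proof.
have sumE (A : {fset Gamma}) : \sum_(s <- A) ((lambda s ^ (2 * p))%:R * `|xi s| ^+ 2)
    = (\sum_(s <- A) weight p xi s)%:C.
  rewrite rmorph_sum; apply: eq_bigr => s _.
  by rewrite /weight rmorphM rmorph_nat normE -rmorphXn natrX.
by split => H A; move: (H A); rewrite sumE lecR.
Qed.

Lemma wbound_ge0 p (xi : Gamma -> C) M : wbound p xi M -> 0 <= M.
Proof. by move/wboundE => /(_ fset0); rewrite big_nil. Qed.

Lemma wbound_mono p q (xi : Gamma -> C) M : (p <= q)%N -> wbound q xi M -> wbound p xi M.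
Proof.
move=> pq /wboundE H; apply/wboundE => A; apply: le_trans (H A).
apply: ler_sum => s _; rewrite /weight ler_wpM2r ?exprn_ge0 ?cmod_ge0 // ler_nat.
by rewrite leq_pexp2l ?lambda_gt0 // leq_mul2l pq orbT.
Qed.

Lemma wbound_dom p q (g h : Gamma -> C) (c M : R) :
  (forall s, weight p g s <= c * weight q h s) -> 0 <= c ->
  wbound q h M -> wbound p g (c * M).
Proof.
move=> H c0 /wboundE hM; apply/wboundE => A.
apply: le_trans (ler_sum _ (fun s _ => H s)) _.
by rewrite -mulr_sumr ler_wpM2l.
Qed.

Lemma weight_mul p j (m xi : Gamma -> C) (c : R) s :
  cmod (m s) <= c * (lambda s)%:R ^+ j ->
  weight p (fun t => m t * xi t) s <= c ^+ 2 * weight (p + j) xi s.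
Proof.
move=> hm; have hm2 : cmod (m s) ^+ 2 <= c ^+ 2 * ((lambda s)%:R ^+ j) ^+ 2.
  rewrite -exprMn lerXn2r // nnegrE ?cmod_ge0 //.
  exact: le_trans (cmod_ge0 _) hm.
have hL : (lambda s ^ (2 * (p + j)))%:R =
          (lambda s ^ (2 * p))%:R * ((lambda s)%:R ^+ j) ^+ 2 :> R.
  by rewrite mulnDr expnD natrM -exprM -natrX [(j * 2)%N]mulnC.
rewrite /weight /= cmodM exprMn hL.
set L := (lambda s ^ _)%:R; set B := _ ^+ j ^+ 2; set X := cmod (xi s) ^+ 2.
have -> : c ^+ 2 * (L * B * X) = L * ((c ^+ 2 * B) * X) by ring.
by rewrite ler_wpM2l ?ler0n // ler_wpM2r ?exprn_ge0 ?cmod_ge0.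
Qed.

End Norms.

Section TestSpace.
Variable R : realType.
Local Notation C := R[i].

Lemma inS_sub (g h : Gamma -> C) :
  (forall s, cmod (g s) <= cmod (h s)) -> inS h -> inS g.
Proof.
move=> H hS p; have [M hM] := hS p; exists (1 * M).
apply: wbound_dom hM => // s; rewrite mul1r /weight ler_wpM2l ?ler0n //.
by rewrite lerXn2r ?nnegrE ?cmod_ge0.
Qed.

Lemma inS_mul j (m xi : Gamma -> C) (c : R) :
  (forall s, cmod (m s) <= c * (lambda s)%:R ^+ j) ->
  inS xi -> inS (fun s => m s * xi s).
Proof.
move=> hm xS p; have [M hM] := xS (p + j)%N; exists (c ^+ 2 * M).
by apply: wbound_dom hM; [move=> s; exact: weight_mul | exact: sqr_ge0].
Qed.

Lemma weight_Zb p t s :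
  weight p (Zb R t) s = if s == t then (lambda t ^ (2 * p))%:R else 0.
Proof.
rewrite /weight /Zb; case: eqP => [->|_]; first by rewrite cmod1 expr1n mulr1.
by rewrite cmod0 expr0n /= mulr0.
Qed.

Lemma inS_Zb t : inS (Zb R t).
Proof.
move=> p; exists (lambda t ^ (2 * p))%:R; apply/wboundE => A.
case: (boolP (t \in (A : seq Gamma))) => tA.
  rewrite (bigD1_seq t) //= ?fset_uniq // weight_Zb eqxx big1 ?addr0 //.
  by move=> s /negbTE st; rewrite weight_Zb st.
rewrite big1_seq ?ler0n // => s /= sA; rewrite weight_Zb; case: eqP => // st.
by move: tA; rewrite -st sA.
Qed.

Lemma inS0 : inS (fun _ : Gamma => 0 : C).
Proof.
by apply: (inS_sub (h := Zb R fset0)) (inS_Zb _) => s; rewrite cmod0 cmod_ge0.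
Qed.

End TestSpace.

Section DualSpace.
Variable R : realType.
Local Notation C := R[i].

Definition linearS (P : functional R) : Prop :=
  forall (a : C) (xi eta : Gamma -> C), inS xi -> inS eta ->
    P (fun s => a * xi s + eta s) = a * P xi + P eta.

Definition dual_bound (P : functional R) (p : nat) (K : R) : Prop :=
  0 <= K /\ forall xi : Gamma -> C, inS xi ->
    forall M : R, wbound p xi M -> cmod (P xi) ^+ 2 <= K * M.

Lemma inSdualP (P : functional R) :
  inSdual P <-> linearS P /\ exists p K, dual_bound P p K.
Proof.
split.
  case=> L [p [K H]]; split => //; exists p, `|K|; split => // xi xS M hM.
  rewrite -cmod_sqr_le; apply: le_trans (H xi xS M hM) _.
  by rewrite lecR ler_wpM2r ?ler_norm // (wbound_ge0 hM).
case=> L [p [K [K0 H]]]; split => //; exists p, K => xi xS M hM.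
by rewrite cmod_sqr_le; apply: H.
Qed.

Lemma dual_bound_mono (P : functional R) p q K :
  (p <= q)%N -> dual_bound P p K -> dual_bound P q K.
Proof. by move=> pq [K0 H]; split => // xi xS M /(wbound_mono pq); apply: H. Qed.

Lemma linS0 (P : functional R) : linearS P -> P (fun _ => 0) = 0.
Proof.
move=> L; have := L 1 _ _ (inS0 R) (inS0 R).
have -> : (fun s : Gamma => (1 : C) * 0 + 0) = (fun _ => 0).
  by apply: funext => s; rewrite mulr0 addr0.
by rewrite mul1r => /eqP; rewrite -subr_eq0 opprD addrA subrr sub0r oppr_eq0 => /eqP.
Qed.

Lemma linSZ (P : functional R) (a : C) (xi : Gamma -> C) :
  linearS P -> inS xi -> P (fun s => a * xi s) = a * P xi.
Proof.
move=> L xS; have := L a xi _ xS (inS0 R).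
have -> : (fun s : Gamma => a * xi s + 0) = (fun s => a * xi s).
  by apply: funext => s; rewrite addr0.
by rewrite linS0 // addr0.
Qed.

Lemma linSD (P : functional R) (xi eta : Gamma -> C) :
  linearS P -> inS xi -> inS eta -> P (fun s => xi s + eta s) = P xi + P eta.
Proof.
move=> L xS eS; have := L 1 xi eta xS eS.
have -> : (fun s : Gamma => 1 * xi s + eta s) = (fun s => xi s + eta s).
  by apply: funext => s; rewrite mul1r.
by rewrite mul1r.
Qed.

Lemma inSdual0 : inSdual (fun _ : Gamma -> C => 0 : C).
Proof.
apply/inSdualP; split; first by move=> *; rewrite mulr0 addr0.
by exists 0%N, 0; split => // xi _ M _; rewrite cmod0 expr0n /= mul0r.
Qed.

Lemma inSdual_comb (P Q : functional R) (c : C) :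
  inSdual P -> inSdual Q -> inSdual (fun xi => P xi + c * Q xi).
Proof.
move=> /inSdualP [LP [p1 [K1 H1]]] /inSdualP [LQ [p2 [K2 H2]]].
apply/inSdualP; split.
  by move=> a xi eta xS eS; rewrite LP // LQ //; ring.
have [K10 {}H1] := dual_bound_mono (leq_maxl p1 p2) H1.
have [K20 {}H2] := dual_bound_mono (leq_maxr p1 p2) H2.
exists (maxn p1 p2), (2 * cmod c ^+ 2 * K2 + 2 * K1); split.
  by rewrite addr_ge0 ?mulr_ge0 ?cmod_ge0.
move=> xi xS M hM; rewrite addrC; apply: le_trans (cmod_lin_sqr _ _ _) _.
have hQ : 2 * cmod c ^+ 2 * cmod (Q xi) ^+ 2 <= 2 * cmod c ^+ 2 * (K2 * M).
  by rewrite ler_wpM2l ?H2 // mulr_ge0 ?exprn_ge0 ?cmod_ge0.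
have hP : 2 * cmod (P xi) ^+ 2 <= 2 * (K1 * M) by rewrite ler_wpM2l ?H1.
have -> : (2 * cmod c ^+ 2 * K2 + 2 * K1) * M =
          2 * cmod c ^+ 2 * (K2 * M) + 2 * (K1 * M) by ring.
exact: lerD hQ hP.
Qed.

Lemma inSdual_sum (B : nat -> functional R) (c : nat -> C) n :
  (forall k, inSdual (B k)) -> inSdual (fun xi => \sum_(k < n) c k * B k xi).
Proof.
move=> HB; elim: n => [|n IH].
  have -> : (fun xi => \sum_(k < 0) c k * B k xi) = (fun _ => 0).
    by apply: funext => xi; rewrite big_ord0.
  exact: inSdual0.
have -> : (fun xi => \sum_(k < n.+1) c k * B k xi) =
          (fun xi => \sum_(k < n) c k * B k xi + c n * B n xi).
  by apply: funext => xi; rewrite big_ord_recr.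
exact: inSdual_comb.
Qed.

Lemma dual_bound_mul j (m : Gamma -> C) (c : R) (P : functional R) p K :
  (forall s, cmod (m s) <= c * (lambda s)%:R ^+ j) -> dual_bound P p K ->
  dual_bound (fun xi => P (fun s => m s * xi s)) (p + j) (K * c ^+ 2).
Proof.
move=> hm [K0 H]; split; first by rewrite mulr_ge0 ?sqr_ge0.
move=> xi xS M hM; rewrite -mulrA; apply: H; first exact: inS_mul hm xS.
by apply: wbound_dom hM; [move=> s; exact: weight_mul | exact: sqr_ge0].
Qed.

Lemma inSdual_mul j (m : Gamma -> C) (c : R) (P : functional R) :
  (forall s, cmod (m s) <= c * (lambda s)%:R ^+ j) -> inSdual P ->
  inSdual (fun xi => P (fun s => m s * xi s)).
Proof.
move=> hm /inSdualP [L [p [K HP]]]; apply/inSdualP; split.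
  move=> a xi eta xS eS.
  have -> : (fun s => m s * (a * xi s + eta s)) =
            (fun s => a * (m s * xi s) + m s * eta s).
    by apply: funext => s; ring.
  by rewrite L //; apply: inS_mul hm _.
by exists (p + j)%N, (K * c ^+ 2); apply: dual_bound_mul.
Qed.

End DualSpace.

Section FockUniqueness.
Variable R : realType.
Local Notation C := R[i].

Lemma sum_fsetU (f : Gamma -> R) (A B : {fset Gamma}) :
  \sum_(s <- (A `|` B)%fset) f s =
  \sum_(s <- A) f s + \sum_(s <- B) (if s \in A then 0 else f s).
Proof.
rewrite (perm_big (A ++ [seq s <- B | s \notin A])).
  rewrite big_cat /= big_filter; congr (_ + _); rewrite big_mkcond.
  by apply: eq_bigr => s _; case: (s \in A).
apply: uniq_perm; first exact: fset_uniq.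
  rewrite cat_uniq fset_uniq filter_uniq ?fset_uniq //= andbT.
  by apply/hasPn => s; rewrite mem_filter => /andP [].
by move=> s; rewrite mem_cat mem_filter in_fsetU; case: (s \in A).
Qed.

(** Tails of a convergent series ‖ξ‖_p² are small: outside a finite set l
    of indices the remaining part of ξ has ‖·‖_p² ≤ ε.  This is where the
    completeness of R (existence of suprema) enters. *)
Lemma wbound_tail_small p (xi : Gamma -> C) M eps : wbound p xi M -> 0 < eps ->
  exists l : {fset Gamma}, wbound p (fun s => if s \in l then 0 else xi s) eps.
Proof.
move=> /wboundE hM e0.
pose E : set R := fun r => exists A : {fset Gamma}, r = \sum_(s <- A) weight p xi s.
have hE : has_sup E.
  split; first by exists 0, fset0; rewrite big_nil.
  by exists M => r [A ->]; apply: hM.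
have [e [l ->] he] := sup_adherent e0 hE.
exists l; apply/wboundE => B.
have := sup_upper_bound hE (ex_intro _ (l `|` B)%fset erefl).
rewrite sum_fsetU.
have -> : \sum_(s <- B) weight p (fun s => if s \in l then 0 else xi s) s =
          \sum_(s <- B) (if s \in l then 0 else weight p xi s).
  apply: eq_bigr => s _; rewrite /weight; case: (s \in l) => //.
  by rewrite cmod0 expr0n /= mulr0.
lra.
Qed.

Lemma linS_finite_support (P : functional R) (xi : Gamma -> C) (l : seq Gamma) :
  linearS P -> inS xi -> (forall t, P (Zb R t) = 0) ->
  P (fun s => if s \in l then xi s else 0) = 0.
Proof.
move=> L xS HZ; elim: l => [|t l IH].
  have -> : (fun s : Gamma => if s \in [::] then xi s else 0) = (fun _ => 0).
    exact: funext.
  exact: linS0.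
case: (boolP (t \in l)) => tl.
  rewrite -[RHS]IH; congr P; apply: funext => s; rewrite inE.
  by case: eqP => // ->; rewrite tl.
have -> : (fun s => if s \in t :: l then xi s else 0) =
          (fun s => xi t * Zb R t s + (if s \in l then xi s else 0)).
  apply: funext => s; rewrite inE /Zb.
  case: eqP => [->|_]; first by rewrite (negbTE tl) mulr1 addr0.
  by rewrite mulr0 add0r.
rewrite (L (xi t) (Zb R t)) ?HZ ?IH ?mulr0 ?addr0 //; first exact: inS_Zb.
by apply: inS_sub xS => s; case: (s \in l); rewrite ?cmod0 ?cmod_ge0.
Qed.

(** A continuous linear functional vanishing on the basis (Z_t) vanishes on
    S(M): split ξ into a finitely supported head and a small tail. *)
Lemma dual_vanish (P : functional R) p K :
  linearS P -> dual_bound P p K -> (forall t, P (Zb R t) = 0) ->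
  forall xi, inS xi -> P xi = 0.
Proof.
move=> L [K0 HC] HZ xi xS.
suff h : cmod (P xi) ^+ 2 <= 0.
  have h0 : cmod (P xi) = 0 by apply/eqP; rewrite -sqrf_eq0 eq_le h sqr_ge0.
  by apply/normr0_eq0; rewrite normE h0.
apply/ler_addgt0Pr => e e0; rewrite add0r.
have K1 : 0 < K + 1 by lra.
have [M hM] := xS p; have [l hl] := wbound_tail_small hM (divr_gt0 e0 K1).
have hT : inS (fun s => if s \in l then 0 else xi s).
  by apply: inS_sub xS => s; case: (s \in l); rewrite ?cmod0 ?cmod_ge0.
have hH : inS (fun s => if s \in (l : seq Gamma) then xi s else 0).
  by apply: inS_sub xS => s; case: (s \in (l : seq Gamma)); rewrite ?cmod0 ?cmod_ge0.
have -> : xi = (fun s => (if s \in l then 0 else xi s) +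
                         (if s \in (l : seq Gamma) then xi s else 0)).
  by apply: funext => s; case: (s \in l); rewrite ?add0r ?addr0.
rewrite linSD // linS_finite_support // addr0.
apply: le_trans (HC _ hT _ hl) _.
by rewrite mulrA ler_pdivrMr //; lra.
Qed.

Lemma fock_inj (P Q : functional R) : inSdual P -> inSdual Q ->
  (forall t, fock P t = fock Q t) -> forall xi, inS xi -> P xi = Q xi.
Proof.
move=> PD QD hPQ xi xS; apply/eqP; rewrite -subr_eq0; apply/eqP.
have /inSdualP [L [p [K HB]]] := inSdual_comb (-1) PD QD.
have := dual_vanish L HB _ xS; rewrite mulN1r; apply=> t.
by have := hPQ t; rewrite /fock => ->; rewrite mulN1r subrr.
Qed.

End FockUniqueness.

(** For distinct naturals, #l ≤ ∏_{k ∈ l} (k+1), strictly if 0 ∉ l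
    (the strengthening makes the induction go through). *)
Lemma size_le_prod (l : seq nat) : uniq l ->
  (size l <= \prod_(k <- l) k.+1)%N /\
  (0%N \notin l -> (size l < \prod_(k <- l) k.+1)%N).
Proof.
elim: l => [|k l IH] /=; first by rewrite big_nil.
case/andP => kl /IH [h1 h2]; rewrite big_cons inE.
have P0 : (0 < \prod_(j <- l) j.+1)%N.
  by elim/big_ind: _ => // x y; rewrite muln_gt0 => -> ->.
move: h1 h2 P0; set P := \prod_(j <- l) j.+1 => h1 h2 P0.
case: (posnP k) => [k0|kp].
  have h3 : (size l < P)%N by apply: h2; rewrite -k0.
  by rewrite k0 eqxx /=; split => //; lia.
have -> : (0 == k) = false by apply/eqP => e; rewrite -e in kp.
by split => [|/= /h2]; nia.
Qed.

Lemma size_lambda (s : Gamma) : (size s <= lambda s)%N.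
Proof. by have [] := size_le_prod (fset_uniq s). Qed.

Lemma lambda_ge k (s : Gamma) : k \in s -> (k.+1 <= lambda s)%N.
Proof.
move=> ks; rewrite /lambda (bigD1_seq k) ?fset_uniq //=.
by apply: leq_pmulr; elim/big_ind: _ => // x y; rewrite muln_gt0 => -> ->.
Qed.

Section TailCount.
Variable R : realType.

Definition tail_count (u : nat -> R) (n : nat) (s : Gamma) : R :=
  \sum_(k <- s | (n < k)%N) u k.

Lemma count_u_split (u : nat -> R) n s :
  count_u u s = \sum_(k < n.+1) u k * ((k : nat) \in s)%:R + tail_count u n s.
Proof.
rewrite /count_u /tail_count (bigID (fun k => (n < k)%N)) /= addrC; congr (_ + _).
rewrite -(big_mkord xpredT (fun k => u k * (k \in s)%:R)).
have -> : \sum_(0 <= i < n.+1) u i * (i \in s)%:R =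
          \sum_(i <- iota 0 n.+1 | i \in s) u i.
  by rewrite [RHS]big_mkcond; apply: eq_bigr => k _; case: (k \in s); rewrite ?mulr1 ?mulr0.
rewrite -big_filter -[in RHS]big_filter; apply: perm_big; apply: uniq_perm.
- by rewrite filter_uniq ?fset_uniq.
- by rewrite filter_uniq ?iota_uniq.
move=> k; rewrite !mem_filter mem_iota add0n ltnS leqNgt /=.
by rewrite negbK ltnS andbC.
Qed.

Variables (u : nat -> R) (Ku : R).
Hypothesis u_ge0 : forall k, 0 <= u k.
Hypothesis u_le : forall k, u k <= Ku.

Let Ku_ge0 : 0 <= Ku := le_trans (u_ge0 0) (u_le 0).

Lemma tail_count_ge0 n s : 0 <= tail_count u n s.
Proof. exact: sumr_ge0. Qed.

Lemma tail_count_le_size n s : tail_count u n s <= Ku * (size s)%:R.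
Proof.
rewrite /tail_count; elim: (s : seq nat) => [|k l IH]; first by rewrite big_nil mulr0.
rewrite big_cons /= -(addn1 (size l)) natrD mulrDr mulr1.
by case: (n < k)%N; [rewrite addrC lerD | apply: le_trans IH _; rewrite lerDl Ku_ge0].
Qed.

Lemma tail_count_le_lambda n s :
  cmod (tail_count u n s)%:C <= Ku * (lambda s)%:R ^+ 1.
Proof.
rewrite cmod_real ger0_norm ?tail_count_ge0 //.
apply: le_trans (tail_count_le_size n s) _.
by rewrite ler_wpM2l ?ler_nat ?size_lambda ?Ku_ge0.
Qed.

(** c_n(σ) ≤ K_u λ_σ²/(n+2): c_n(σ) vanishes unless σ contains some k > n,
    and then λ_σ ≥ k+1 ≥ n+2. *)
Lemma tail_count_le_lambda2 n s :
  cmod (tail_count u n s)%:C <= Ku / (n.+2)%:R * (lambda s)%:R ^+ 2.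
Proof.
rewrite cmod_real ger0_norm ?tail_count_ge0 //.
have [/hasP [k ks nk]|/hasPn hn] := boolP (has (fun k => (n < k)%N) s).
  have hn2 : (n.+2)%:R <= (lambda s)%:R :> R.
    by rewrite ler_nat (leq_trans _ (lambda_ge ks)).
  rewrite mulrAC expr2 mulrA ler_pdivlMr ?ltr0n //.
  apply: ler_pM; rewrite ?tail_count_ge0 ?ler0n //.
  have := tail_count_le_lambda n s.
  by rewrite cmod_real ger0_norm ?tail_count_ge0.
have -> : tail_count u n s = 0.
  by rewrite /tail_count big1_seq // => k /andP [nk /hn]; rewrite nk.
by rewrite mulr_ge0 ?divr_ge0 ?exprn_ge0 ?Ku_ge0.
Qed.

End TailCount.

Section NumberOperatorSeries.
Variable R : realType.
Variables (u : nat -> R) (Ku : R).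
Hypothesis u_ge0 : forall k, 0 <= u k.
Hypothesis u_le : forall k, u k <= Ku.
Variables (Nu : functional R -> functional R) (a ad : nat -> functional R -> functional R).
Hypotheses (HN : is_GWN_op u Nu) (Ha : is_annihilators a) (Had : is_creators ad).
Variable Phi : functional R.
Hypothesis PhiD : inSdual Phi.

Lemma number_op_fock k : inSdual (ad k (a k Phi)) /\
  forall s, fock (ad k (a k Phi)) s = (k \in s)%:R * fock Phi s.
Proof.
have [aD af] := Ha k PhiD; have [bD bf] := Had k aD.
split => // s; rewrite bf af.
case ks: (k \in s); last by rewrite !mul0r.
by rewrite in_fsetD1 eqxx /= subr0 !mul1r fsetUC fsetD1K.
Qed.

Definition number_sum (n : nat) : functional R :=
  fun xi => \sum_(k < n.+1) (u k)%:C * ad k (a k Phi) xi.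

Definition remainder (n : nat) : functional R :=
  fun xi => Phi (fun s => (tail_count u n s)%:C * xi s).

(** N_u Φ = Ψ_n + Φ(c_n ·) on S(M): both sides lie in S*(M) and have the
    Fock transform σ ↦ #_u(σ) hat Φ(σ). *)
Lemma gwn_decomposition n xi : inS xi ->
  Nu Phi xi = number_sum n xi + remainder n xi.
Proof.
have [NPD NPf] := HN PhiD.
have sumD : inSdual (number_sum n).
  exact: (inSdual_sum (fun k => (u k)%:C) n.+1 (fun k => (number_op_fock k).1)).
have remD : inSdual (remainder n).
  exact: inSdual_mul (tail_count_le_lambda u_ge0 u_le n) PhiD.
have rhsD : inSdual (fun x => number_sum n x + remainder n x).
  rewrite (_ : (fun x => _) = (fun x => number_sum n x + 1 * remainder n x)).
    exact: inSdual_comb.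
  by apply: funext => x; rewrite mul1r.
apply: fock_inj NPD rhsD _ xi => t.
have hb k : ad k (a k Phi) (Zb R t) = (k \in t)%:R * Phi (Zb R t).
  exact: (number_op_fock k).2 t.
rewrite NPf (count_u_split u n t) /fock /number_sum /remainder.
under [in RHS]eq_bigr do rewrite hb.
have -> : (fun s => (tail_count u n s)%:C * Zb R t s) =
          (fun s => (tail_count u n t)%:C * Zb R t s).
  by apply: funext => s; rewrite /Zb; case: eqP => [->|]; rewrite ?mulr0.
have [LPhi _] := PhiD.
rewrite (linSZ _ LPhi (inS_Zb R t)) rmorphD rmorph_sum /= mulrDl big_distrl /=.
congr (_ + _); apply: eq_bigr => k _.
by rewrite rmorphM /= rmorph_nat -mulrA.
Qed.

Lemma remainder_bound p K n xi M : dual_bound Phi p K -> inS xi ->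
  wbound (p + 2) xi M -> cmod (remainder n xi) ^+ 2 <= K * Ku ^+ 2 * M / (n.+2)%:R ^+ 2.
Proof.
move=> HPhi xS hM.
have [_ HR] := dual_bound_mul (tail_count_le_lambda2 u_ge0 u_le n) HPhi.
apply: le_trans (HR xi xS M hM) _.
by rewrite expr_div_n mulrA mulrAC mulrA.
Qed.

End NumberOperatorSeries.

Lemma inv_sqr_small (R : realType) (A e : R) (n : nat) :
  0 < e -> A / e ^+ 2 < n%:R -> A / (n.+2)%:R ^+ 2 <= e ^+ 2.
Proof.
move=> e0; have e2 : 0 < e ^+ 2 by rewrite exprn_gt0.
have n2 : 0 < (n.+2)%:R ^+ 2 :> R by rewrite exprn_gt0 ?ltr0n.
rewrite ltr_pdivrMr // ler_pdivrMr //.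
have -> : (n.+2)%:R = n%:R + 2 :> R by rewrite -addn2 natrD.
move=> hA.
have n0 : 0 <= n%:R :> R by rewrite ler0n.
nra.
Qed.

Unset Implicit Arguments.

Theorem theorem3p9 (R : realType) (u : nat -> R)
  (u_ge0 : forall k, 0 <= u k) (u_bdd : exists K : R, forall k, u k <= K)
  (Nu : functional R -> functional R) (a ad : nat -> functional R -> functional R) :
  is_GWN_op u Nu -> is_annihilators a -> is_creators ad ->
  forall Phi : functional R, inSdual Phi ->
  strong_cvg
    (fun n => fun xi => \sum_(k < n.+1) (u k)%:C * ad k (a k Phi) xi)
    (Nu Phi).
Proof.
move=> HN Ha Had Phi PhiD B [BS Bb] eps eps0.
have [Ku u_le] := u_bdd.
have /inSdualP [_ [p [K HPhi]]] := PhiD.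
have [M hM] := Bb (p + 2)%N.
pose A := K * Ku ^+ 2 * M.
exists (Num.bound (A / eps ^+ 2)) => n Nn xi Bxi.
have xS := BS xi Bxi; have hMxi := hM xi Bxi.
rewrite (gwn_decomposition u_ge0 u_le HN Ha Had PhiD n xS) /number_sum.
rewrite opprD addrA subrr add0r normrN.
apply: norm_le_of_cmod_sqr (ltW eps0) _.
apply: le_trans (remainder_bound u_ge0 u_le n HPhi xS hMxi) _.
apply: inv_sqr_small eps0 _.
have A0 : 0 <= A / eps ^+ 2.
  apply: divr_ge0; last exact: sqr_ge0.
  by rewrite /A mulr_ge0 ?(wbound_ge0 hMxi) // mulr_ge0 ?sqr_ge0 ?HPhi.1.
by apply: lt_le_trans (archi_boundP A0) _; rewrite ler_nat.
Qed.
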